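(* Let $G$ be a graph on $n$ vertices with a Hamilton cycle $C$, let $k\ge 2$ divide $n$, let $s \ge n/k$, and let $\Pi$ be a noncanonical $(k,s)$-BCP of $G$, with spanning trees $T_i$, centers $c_i$ and heavy/light fragments fixed as in the context. If some light fragment of a large district is adjacent along $C$ (i.e., joined by an edge of $C$) to a vertex of a small district, then there is a single recombination move producing a $(k,s)$-BCP whose total number of fragments is strictly smaller than that of $\Pi$.
   Context: A $(k,s)$-BCP of a graph $G$ on $n$ vertices is a partition of $V(G)$ into $k$ nonempty sets (districts), each inducing a connected subgraph, with $\big||U|-n/k\big|\le s$ for every district $U$. A recombination move replaces two districts $V_i,V_j$ by two sets $W_i,W_j$ with $W_i\cup W_j=V_i\cup V_j$ such that the result is again a $(k,s)$-BCP (different from the original), leaving other districts unchanged. Given a Hamilton cycle $C$: the partition is canonical if every district consists of consecutive vertices along $C$. A fragment of a district $V_i$ is a maximal subset of $V_i$ of vertices contiguous along $C$; $f_i$ denotes the number of fragments of $V_i$, and the total number of fragments is $\sum_i f_i$. A district is small if $|V_i|\le n/k$ and large otherwise. An edge of $G$ not on $C$ is a chord. For each $i$, $T_i$ is a fixed spanning tree of $G[V_i]$ with the minimum number of chords (it consists of the $f_i$ paths along $C$ plus $f_i-1$ chords), and $c_i$ is a fixed center of $T_i$, i.e., a vertex such that every component of $T_i-c_i$ has at most $|V_i|/2$ vertices. The fragment of $V_i$ containing $c_i$ is heavy; the others are light. *)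

From HB Require Import structures.
From mathcomp Require Import all_boot all_order all_algebra all_fingroup.
Set Implicit Arguments. Unset Strict Implicit. Unset Printing Implicit Defensive.
Import Order.TTheory GRing.Theory Num.Theory.
Local Open Scope ring_scope.

(* Vertices: a finite type T, n = #|T|.  Graph: symmetric irreflexive e.
   Hamilton cycle C: a cyclic permutation sigma of T (one orbit) with
   e x (sigma x) for all x; its edges are {x, sigma x}. *)

Definition simple_graph (T : finType) (e : rel T) :=
  symmetric e /\ irreflexive e.

Definition hamilton_cycle (T : finType) (e : rel T) (sigma : {perm T}) :=
  [/\ (3 <= #|T|)%N, forall x, e x (sigma x) & forall x y, fconnect sigma x y].

Definition induced_connected (T : finType) (e : rel T) (U : {set T}) :=
  forall x y, x \in U -> y \in U ->
    connect (fun a b => [&& a \in U, b \in U & e a b]) x y.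

Definition contig (T : finType) (sigma : {perm T}) (A : {set T}) : bool :=
  [exists x, [exists j : 'I_#|T|.+1,
     (0 < j)%N && (A == [set y | [exists i : 'I_j, y == iter i sigma x]])]].

Definition fragment (T : finType) (sigma : {perm T}) (V A : {set T}) : bool :=
  maxset (fun B : {set T} => contig sigma B && (B \subset V)) A.

Definition nfrag (T : finType) (sigma : {perm T}) (V : {set T}) : nat :=
  #|[set A : {set T} | fragment sigma V A]|.

Definition total_frag (T : finType) (sigma : {perm T}) (P : {set {set T}}) : nat :=
  (\sum_(V in P) nfrag sigma V)%N.

Definition BCP (T : finType) (e : rel T) (k : nat) (s : rat)
    (P : {set {set T}}) :=
  [/\ partition P [set: T], #|P| = k &
      (forall U, U \in P ->
        induced_connected e U /\
        `| (#|U|%:R : rat) - (#|T|%:R / k%:R) | <= s)].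

Definition canonical_part (T : finType) (sigma : {perm T}) (P : {set {set T}}) :=
  forall V, V \in P -> contig sigma V.

Definition small_d (T : finType) (k : nat) (V : {set T}) :=
  (#|V|%:R : rat) <= #|T|%:R / k%:R.
Definition large_d (T : finType) (k : nat) (V : {set T}) :=
  #|T|%:R / k%:R < (#|V|%:R : rat).

Definition recombination (T : finType) (e : rel T) (k : nat) (s : rat)
    (P P' : {set {set T}}) :=
  exists V1 V2 W1 W2 : {set T},
    [/\ [&& V1 \in P, V2 \in P & V1 != V2],
        W1 :|: W2 = V1 :|: V2,
        P' = (P :\ V1 :\ V2) :|: [set W1; W2],
        BCP e k s P' & P' != P].

Definition is_edge (T : finType) (e : rel T) (f : {set T}) : bool :=
  [exists x, [exists y, e x y && (f == [set x; y])]].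

Definition C_edge (T : finType) (sigma : {perm T}) (f : {set T}) : bool :=
  [exists x, f == [set x; sigma x]].

Definition spanning_tree (T : finType) (e : rel T) (V : {set T})
    (F : {set {set T}}) :=
  [/\ (forall f, f \in F -> is_edge e f && (f \subset V)),
      (forall x y, x \in V -> y \in V ->
        connect (fun a b => [set a; b] \in F) x y)
    & #|F| = (#|V| - 1)%N].

Definition nchords (T : finType) (sigma : {perm T}) (F : {set {set T}}) :=
  #|[set f in F | ~~ C_edge sigma f]|.

Definition min_chord_tree (T : finType) (e : rel T) (sigma : {perm T})
    (V : {set T}) (F : {set {set T}}) :=
  spanning_tree e V F /\
  forall F', spanning_tree e V F' -> (nchords sigma F <= nchords sigma F')%N.

Definition tree_center (T : finType) (V : {set T}) (F : {set {set T}}) (c : T) :=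
  c \in V /\
  forall u, u \in V -> u != c ->
    (2 * #|[set v | connect (fun a b => [&& a != c, b != c & [set a; b] \in F]) u v]|
      <= #|V|)%N.

From mathcomp Require Import all_boot all_order all_algebra all_fingroup.
Import Order.TTheory GRing.Theory Num.Theory.
From mathcomp Require Import lra.

Set Implicit Arguments. Unset Strict Implicit. Unset Printing Implicit Defensive.

(* The move: delete the light fragment [A] from the min-chord spanning tree
   [T_V]; let [R] be the component of the center [c_V] and [S = V \ R].
   Replace [V, U] by [R, U + S]. *)

Lemma proper_out (T : finType) (W : {set T}) : W != setT -> exists z, z \notin W.
Proof.
move=> W_proper; apply/existsP; rewrite -negb_forall; apply: contra W_proper => /forallP W_all.
by apply/eqP/setP => z; rewrite inE W_all.
Qed.

Section CycleSegments.

Variables (T : finType) (sigma : {perm T}).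

Hypothesis sigma_cycle : forall x y : T, fconnect sigma x y.

Lemma order_cycle x : fingraph.order sigma x = #|T|.
Proof. by apply: eq_card => y; rewrite inE sigma_cycle. Qed.

Lemma iter_cycle_inj a i j :
  i < #|T| -> j < #|T| -> iter i sigma a = iter j sigma a -> i = j.
Proof.
rewrite -(order_cycle a) => hi hj eij.
by rewrite -(findex_iter hi) eij findex_iter.
Qed.

Lemma iter_cycle_onto a z : exists2 i, i < #|T| & z = iter i sigma a.
Proof.
exists (findex sigma a z); last by rewrite iter_findex.
by rewrite -(order_cycle a) findex_max.
Qed.

Lemma findex_succ b a :
  sigma a != b -> findex sigma b (sigma a) = (findex sigma b a).+1.
Proof.
move=> ab; have ltn_a : findex sigma b a < #|T|.
  by rewrite -(order_cycle b) findex_max.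
have ltn_Sa : (findex sigma b a).+1 < #|T|.
  rewrite ltn_neqAle ltn_a andbT; apply: contra ab => /eqP n_eq.
  rewrite -{1}(iter_findex (sigma_cycle b a)) -iterS n_eq -(order_cycle b).
  by rewrite (iter_order (@perm_inj _ sigma)).
by rewrite -{1}(iter_findex (sigma_cycle b a)) -iterS findex_iter // order_cycle.
Qed.

Definition cseg (a : T) (j : nat) : {set T} :=
  [set y | [exists i : 'I_j, y == iter i sigma a]].

Lemma in_cseg a j y :
  reflect (exists2 i, i < j & y = iter i sigma a) (y \in cseg a j).
Proof.
rewrite inE; apply: (iffP existsP) => [[i /eqP ->]|[i lt_ij ->]].
  by exists i.
by exists (Ordinal lt_ij).
Qed.

Lemma card_cseg a j : j <= #|T| -> #|cseg a j| = j.
Proof.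
move=> le_jn.
have -> : cseg a j = [set iter (val i) sigma a | i : 'I_j].
  apply/setP => y; apply/in_cseg/imsetP => [[i lt_ij ->]|[i _ ->]].
    by exists (Ordinal lt_ij).
  by exists i.
rewrite card_imset ?cardsT ?card_ord // => i i' eq_ii'; apply: val_inj.
exact: iter_cycle_inj (leq_trans (ltn_ord i) le_jn) (leq_trans (ltn_ord i') le_jn) eq_ii'.
Qed.

Lemma contig_cseg a j : 0 < j -> j <= #|T| -> contig sigma (cseg a j).
Proof.
move=> j_gt0 le_jn; apply/existsP; exists a; apply/existsP.
by exists (Ordinal (le_jn : j < #|T|.+1)); rewrite /= j_gt0 eqxx.
Qed.

Lemma contigP A :
  contig sigma A -> exists a j, [/\ 0 < j, j <= #|T| & A = cseg a j].
Proof.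
case/existsP=> a /existsP [j /andP [j_gt0 /eqP ->]].
by exists a, j; split=> //; rewrite -ltnS ltn_ord.
Qed.

Lemma cseg_rcons a j : cseg a j.+1 = iter j sigma a |: cseg a j.
Proof.
apply/setP => y; rewrite in_setU1; apply/in_cseg/orP => [[i]|].
  by rewrite ltnS leq_eqVlt => /orP [/eqP -> ->|lt_ij ->]; [left|right; apply/in_cseg; exists i].
by case=> [/eqP ->|/in_cseg [i lt_ij ->]]; [exists j|exists i => //; apply: ltnW].
Qed.

Lemma cseg_cons a j : cseg ((sigma^-1)%g a) j.+1 = (sigma^-1)%g a |: cseg a j.
Proof.
apply/setP => y; rewrite in_setU1; apply/in_cseg/orP => [[[|i] lt_ij ->]|].
- by left.
- by right; apply/in_cseg; exists i; rewrite // iterSr permKV.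
by case=> [/eqP ->|/in_cseg [i lt_ij ->]]; [exists 0|exists i.+1; rewrite ?iterSr ?permKV].
Qed.

Section Fragments.

Variable W : {set T}.
Hypothesis W_proper : W != setT.

Definition frag_start w := (w \in W) && ((sigma^-1)%g w \notin W).

Definition run w := find (fun i => iter i sigma w \notin W) (iota 0 #|T|).

(* The run is the first exit from [W], which exists since [W] is proper. *)
Lemma run_spec w :
  [/\ run w < #|T|, iter (run w) sigma w \notin W &
      forall i, i < run w -> iter i sigma w \in W].
Proof.
have [z zW] := proper_out W_proper.
have has_out : has (fun i => iter i sigma w \notin W) (iota 0 #|T|).
  have [i lt_in def_z] := iter_cycle_onto w z.
  by apply/hasP; exists i; rewrite ?mem_iota // -def_z.
have lt_run : run w < #|T| by move: has_out; rewrite has_find size_iota.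
split=> // [|i lt_i].
  by have := nth_find 0 has_out; rewrite nth_iota.
have := before_find 0 lt_i; rewrite nth_iota ?add0n => [/negbFE //|].
exact: ltn_trans lt_run.
Qed.

Lemma run_eq w j :
  (forall i, i < j -> iter i sigma w \in W) -> iter j sigma w \notin W -> run w = j.
Proof.
move=> in_W out_W; have [_ run_out run_in] := run_spec w.
case: (ltngtP (run w) j) => // lt.
  by move: (in_W _ lt); rewrite (negbTE run_out).
by move: (run_in _ lt); rewrite (negbTE out_W).
Qed.

Lemma run_gt0 a : frag_start a -> 0 < run a.
Proof.
move=> /andP [aW _]; have [_ run_out _] := run_spec a.
by rewrite lt0n; apply: contraNneq run_out => ->.
Qed.

Lemma fragment_shape A :
  fragment sigma W A -> exists a, frag_start a /\ A = cseg a (run a).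
Proof.
case/maxsetP => /andP [contigA subAW] maxA.
have [a [j [j_gt0 le_jn defA]]] := contigP contigA.
have in_W i : i < j -> iter i sigma a \in W.
  by move=> lt_ij; apply: (subsetP subAW); rewrite defA; apply/in_cseg; exists i.
have lt_jn : j < #|T|.
  rewrite ltn_neqAle le_jn andbT; apply/negP => /eqP def_j; move/negP: W_proper; apply.
  have /eqP eqAT : A == setT by rewrite eqEcard subsetT cardsT defA card_cseg // def_j /=.
  by rewrite -subTset -eqAT.
(* A longer contiguous subset of [W] containing [A] would contradict maximality. *)
have grow b : contig sigma (cseg b j.+1) -> A \subset cseg b j.+1 ->
    cseg b j.+1 \subset W -> False.
  move=> contigB subAB subBW.
  have := congr1 (fun B : {set T} => #|B|) (maxA _ (introT andP (conj contigB subBW)) subAB).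
  by rewrite /= defA !card_cseg // => /esym/n_Sn.
have out_W : iter j sigma a \notin W.
  apply/negP => jW; apply: (grow a); rewrite ?contig_cseg // cseg_rcons ?defA ?subsetUr //.
  by rewrite subUset sub1set jW -defA subAW.
have pred_out : (sigma^-1)%g a \notin W.
  apply/negP => pW; apply: (grow ((sigma^-1)%g a));
    rewrite ?contig_cseg // cseg_cons ?defA ?subsetUr //.
  by rewrite subUset sub1set pW -defA subAW.
exists a; split; first by rewrite /frag_start pred_out andbT (in_W 0).
by rewrite defA (run_eq in_W out_W).
Qed.

Lemma fragment_of_start a : frag_start a -> fragment sigma W (cseg a (run a)).
Proof.
move=> start_a; have [lt_run run_out run_in] := run_spec a.
have run_pos := run_gt0 start_a; case/andP: start_a => aW pred_out.
apply/maxsetP; split.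
  rewrite contig_cseg ?(ltnW lt_run) //=.
  by apply/subsetP => y /in_cseg [i lt_i ->]; apply: run_in.
move=> _ /andP [/contigP [b [m [_ _ ->]]] subBW] subAB.
have /in_cseg [[|i] lt_im def_a] : a \in cseg b m.
  by apply: (subsetP subAB); apply/in_cseg; exists 0.
- (* the segment starts at [a], so it cannot extend past the run *)
  rewrite /= in def_a; subst b.
  apply/eqP; rewrite eqEsubset subAB andbT; apply/subsetP => y /in_cseg [i lt_i ->].
  apply/in_cseg; exists i => //; rewrite ltnNge; apply: contraNN run_out => le_run.
  by apply: (subsetP subBW); apply/in_cseg; exists (run a) => //; apply: leq_ltn_trans lt_i.
- (* the segment starts before [a], so it contains the predecessor of [a] *)
  case/negP: pred_out; apply: (subsetP subBW); apply/in_cseg; exists i; last first.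
    by rewrite def_a iterS permK.
  exact: ltnW.
Qed.

Lemma fragment_start_inj a b : frag_start a -> frag_start b ->
  cseg a (run a) = cseg b (run b) -> a = b.
Proof.
move=> start_a start_b eq_ab.
have : b \in cseg a (run a) by rewrite eq_ab; apply/in_cseg; exists 0; rewrite ?run_gt0.
case/in_cseg => [[|i] lt_i def_b]; first by rewrite def_b.
case/andP: start_b => _ /negP []; have [_ _ run_in] := run_spec a.
by rewrite def_b iterS permK run_in // ltnW.
Qed.

Lemma nfrag_starts : nfrag sigma W = #|[set w | frag_start w]|.
Proof.
rewrite /nfrag.
have -> : [set A | fragment sigma W A] = (fun a => cseg a (run a)) @: [set w | frag_start w].
  apply/setP => A; rewrite inE; apply/idP/imsetP.
    by move=> /fragment_shape [a [start_a ->]]; exists a; rewrite ?inE.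
  by move=> [a]; rewrite inE => start_a ->; apply: fragment_of_start.
by apply: card_in_imset => a b; rewrite !inE; apply: fragment_start_inj.
Qed.

Section OneFragment.

Variable A : {set T}.
Hypothesis fragA : fragment sigma W A.

Lemma fragment_sub : A \subset W.
Proof. by case/maxsetP: fragA => /andP []. Qed.

Lemma fragment_succ w : w \in A -> sigma w \in W -> sigma w \in A.
Proof.
have [a [_ defA]] := fragment_shape fragA; have [_ run_out _] := run_spec a.
rewrite defA => /in_cseg [i lt_i ->] succW; apply/in_cseg; exists i.+1; last by rewrite iterS.
by rewrite ltn_neqAle lt_i andbT; apply: contraNneq run_out => <-; rewrite iterS.
Qed.

Lemma fragment_pred w : w \in A -> (sigma^-1)%g w \in W -> (sigma^-1)%g w \in A.
Proof.
have [a [/andP [_ pred_out] defA]] := fragment_shape fragA.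
rewrite defA => /in_cseg [[|i] lt_i ->] predW; first by rewrite predW in pred_out.
by rewrite iterS permK; apply/in_cseg; exists i => //; apply: ltnW.
Qed.

Lemma fragment_path : exists a, forall w, w \in A ->
  connect [rel u u' | [&& u \in A, u' \in A & u' == sigma u]] a w.
Proof.
have [a [_ defA]] := fragment_shape fragA; exists a => w.
rewrite defA => /in_cseg [i lt_i ->]; elim: i lt_i => [|i IHi] lt_i; first exact: connect0.
apply: connect_trans (IHi (ltnW lt_i)) (connect1 _).
by rewrite /= eqxx andbT; apply/andP; split; apply/in_cseg;
  [exists i => //; apply: ltnW | exists i.+1].
Qed.

End OneFragment.

End Fragments.

End CycleSegments.

Lemma same_block (T : finType) (P : {set {set T}}) B B' w :
  trivIset P -> B \in P -> B' \in P -> w \in B -> w \in B' -> B = B'.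
Proof.
by move=> triP BP B'P wB wB'; rewrite -(def_pblock triP BP wB) (def_pblock triP B'P wB').
Qed.

Lemma block_proper (T : finType) (P : {set {set T}}) B :
  partition P [set: T] -> 1 < #|P| -> B \in P -> B != setT.
Proof.
move=> partP /card_gt1P [B1 [B2 [B1P B2P neqB]]] BP; apply/eqP => defB.
have triP := partition_trivIset partP.
have [w wB2] := set0Pn _ (partition_neq0 partP B2P).
have [v vB1] := set0Pn _ (partition_neq0 partP B1P).
have eqB1 : B1 = B by apply: same_block triP B1P BP vB1 _; rewrite defB inE.
have eqB2 : B2 = B by apply: same_block triP B2P BP wB2 _; rewrite defB inE.
by rewrite eqB1 eqB2 eqxx in neqB.
Qed.

Section CutVertices.

Variables (T : finType) (sigma : {perm T}).
Hypothesis sigma_cycle : forall x y : T, fconnect sigma x y.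

Definition cut_vertex (P : {set {set T}}) w :=
  ~~ [exists B in P, (w \in B) && ((sigma^-1)%g w \in B)].

Lemma total_frag_cuts (P : {set {set T}}) :
  partition P [set: T] -> 1 < #|P| ->
  total_frag sigma P = #|[set w | cut_vertex P w]|.
Proof.
move=> partP P_gt1; have triP := partition_trivIset partP.
rewrite -sum1dep_card (eq_bigl (fun w => (w \in [set: T]) && cut_vertex P w)) => [|w];
  last by rewrite inE.
rewrite (set_partition_big_cond _ partP) /total_frag; apply: eq_bigr => B BP.
rewrite nfrag_starts ?(block_proper partP) // sum1dep_card; apply: eq_card => w.
rewrite !inE /frag_start; case: (boolP (w \in B)) => //= wB; congr negb.
apply/idP/existsP => [predB|[B' /and3P [B'P wB' predB']]]; first by exists B; rewrite BP wB.
by rewrite (same_block triP BP B'P wB wB').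
Qed.

End CutVertices.

Lemma connect_invariant (T : finType) (E : rel T) (K : pred T) x y :
  (forall a b, K a -> E a b -> K b) -> K x -> connect E x y -> K y.
Proof.
move=> closedK Kx /connectP [p walk_p ->]; elim: p x Kx walk_p => //= a p IHp x Kx.
by case/andP => Exa walk_a; apply: IHp (closedK _ _ Kx Exa) walk_a.
Qed.

Lemma connect_exit (T : finType) (E : rel T) (K : pred T) x y :
  connect E x y -> K x -> ~~ K y -> exists a b, [/\ E a b, K a & ~~ K b].
Proof.
move=> conn_xy Kx notKy.
case: (boolP [exists a, exists b, [&& E a b, K a & ~~ K b]]).
  by case/existsP => a /existsP [b /and3P [Eab Ka notKb]]; exists a, b.
move=> no_exit; case/negP: notKy; apply: connect_invariant conn_xy => // a b Ka Eab.
apply/negPn/negP => notKb; case/negP: no_exit.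
by apply/existsP; exists a; apply/existsP; exists b; rewrite Eab Ka notKb.
Qed.

Definition edge_rel (T : finType) (F : {set {set T}}) : rel T :=
  fun a b => [set a; b] \in F.

Lemma edge_rel_sym (T : finType) (F : {set {set T}}) : symmetric (edge_rel F).
Proof. by move=> a b; rewrite /edge_rel setUC. Qed.

Lemma set2_inj (T : finType) (u w x y : T) :
  [set u; w] = [set x; y] -> (u = x /\ w = y) \/ (u = y /\ w = x).
Proof.
move=> eq_uw.
have : u \in [set x; y] by rewrite -eq_uw set21.
have : w \in [set x; y] by rewrite -eq_uw set22.
have : x \in [set u; w] by rewrite eq_uw set21.
have : y \in [set u; w] by rewrite eq_uw set22.
by rewrite !inE; do 4 (case/orP => /eqP ?); subst; auto.
Qed.

Definition chords (T : finType) (sigma : {perm T}) (H : {set {set T}}) :=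
  [set f in H | ~~ C_edge sigma f].

Lemma bridge_ends (T : finType) (H : {set {set T}}) h v w :
  h \in H -> connect (edge_rel H) v w -> ~~ connect (edge_rel (H :\ h)) v w ->
  exists p q, [/\ h = [set p; q], connect (edge_rel (H :\ h)) v p &
                  connect (edge_rel (H :\ h)) w q].
Proof.
move=> hH conn_vw not_vw; pose E := edge_rel (H :\ h).
have symE : connect_sym E by apply: sym_connect_sym; apply: edge_rel_sym.
have exit_h u u' : connect (edge_rel H) u u' -> ~~ connect E u u' ->
    exists p q, [/\ [set p; q] = h, connect E u p & ~~ connect E u q].
  move=> conn not_conn; have [p [q [Hpq Kp notKq]]] := connect_exit conn (connect0 E u) not_conn.
  exists p, q; split=> //; apply/eqP; apply: contraNT notKq => neq_h.
  by apply: connect_trans Kp (connect1 _); rewrite /E /edge_rel !inE neq_h.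
have [p [q [def_h vp not_vq]]] := exit_h _ _ conn_vw not_vw.
have [p' [q' [def_h' wp' not_wq']]] : exists p q,
    [/\ [set p; q] = h, connect E w p & ~~ connect E w q].
  apply: (exit_h w v); first by rewrite (sym_connect_sym (@edge_rel_sym _ H)).
  by rewrite (symE w).
rewrite -def_h in def_h'; case: (set2_inj def_h') => [[eq_p _]|[eq_q _]].
  by case/negP: not_vw; apply: connect_trans vp _; rewrite (symE p) -eq_p.
by rewrite eq_q in wp'; exists p, q; split; rewrite ?def_h.
Qed.

Section MinChordTree.

Variables (T : finType) (e : rel T) (sigma : {perm T}) (V : {set T}).
Hypothesis sigma_cycle : forall x y : T, fconnect sigma x y.
Hypothesis V_proper : V != setT.

(* Cycle edges inside [V] other than [{v, sigma v}] cannot connect [v] to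
   [sigma v]: that would require going around C through a vertex outside [V]. *)
Lemma cycle_path_blocked (H : {set {set T}}) v :
  v \in V -> sigma v \in V ->
  (forall f, f \in H -> [&& C_edge sigma f, f \subset V & f != [set v; sigma v]]) ->
  ~~ connect (edge_rel H) v (sigma v).
Proof.
move=> vV svV H_cycle; pose pos := findex sigma (sigma v).
have [z zV] := proper_out V_proper.
have pos_inj u u' : pos u = pos u' -> u = u'.
  move=> eq_pos; rewrite -(iter_findex (sigma_cycle (sigma v) u)).
  by rewrite -(iter_findex (sigma_cycle (sigma v) u')) -/(pos u) eq_pos.
have pos_v : pos v = #|T|.-1.
  have n_gt0 : 0 < #|T| by apply/card_gt0P; exists v.
  have iter_v : iter #|T|.-1 sigma (sigma v) = v.
    by rewrite -iterSr prednK // -(order_cycle sigma_cycle v) (iter_order (@perm_inj _ sigma)).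
  by rewrite -{1}iter_v /pos findex_iter // order_cycle // ltn_predL.
have pos_lt u : pos u < #|T| by rewrite -(order_cycle sigma_cycle (sigma v)) findex_max.
(* vertices of [V] beyond [z] (in the order of C from [sigma v]) are closed under [H] *)
have beyond_z a b : pos z < pos a -> edge_rel H a b -> pos z < pos b.
  move=> lt_za Hab; rewrite /pos in lt_za *.
  case/and3P: (H_cycle _ Hab) => /existsP [u /eqP def_f] subV not_g.
  have bV : b \in V by apply: (subsetP subV); rewrite set22.
  have u_v : u != v by apply: contraNneq not_g => eq_uv; rewrite def_f eq_uv.
  have su_sv : sigma u != sigma v by rewrite (inj_eq (@perm_inj _ sigma)).
  case: (set2_inj def_f) => [[au bu] | [au bu]]; subst a b.
    by rewrite findex_succ // ltnW // ltnS.
  move: lt_za; rewrite findex_succ // ltnS leq_eqVlt => /orP [/eqP eq_zb|//].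
  by move: bV; rewrite -(pos_inj _ _ eq_zb) (negbTE zV).
have lt_zv : pos z < pos v.
  rewrite ltn_neqAle; apply/andP; split; first by apply: contraNneq zV => /pos_inj ->.
  by rewrite pos_v -ltnS prednK ?pos_lt // (leq_ltn_trans _ (pos_lt z)).
apply/negP => conn; have := connect_invariant beyond_z lt_zv conn.
by rewrite /pos findex0 ltn0.
Qed.

(* Take [H] with
   the fewest chords; cycle edges alone cannot do the job. *)
Lemma critical_chord (F : {set {set T}}) v :
  v \in V -> sigma v \in V -> (forall f, f \in F -> f \subset V) ->
  [set v; sigma v] \notin F -> connect (edge_rel F) v (sigma v) ->
  exists (H : {set {set T}}) h, [/\ H \subset F, h \in H, ~~ C_edge sigma h,
                 connect (edge_rel H) v (sigma v) &
                 ~~ connect (edge_rel (H :\ h)) v (sigma v)].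
Proof.
move=> vV svV F_sub gF connF.
pose good (H : {set {set T}}) := (H \subset F) && connect (edge_rel H) v (sigma v).
have goodF : good F by rewrite /good subxx connF.
case: (arg_minnP (fun H : {set {set T}} => #|chords sigma H|) goodF) => H /andP [subHF connH] minH.
have [h /andP [hH chord_h]] : exists h, (h \in H) && ~~ C_edge sigma h.
  apply/existsP; apply: contraTT connH => /existsPn no_chord.
  apply: cycle_path_blocked => // f fH; have := no_chord f; rewrite fH /= => /negbNE ->.
  rewrite F_sub ?(subsetP subHF) //=; apply: contraNneq gF => <-.
  exact: (subsetP subHF).
exists H, h; split=> //; apply/negP => conn_h.
have := minH (H :\ h); rewrite /good conn_h andbT (subset_trans (subD1set _ _) subHF).
apply/implyP; rewrite -ltnNge; apply: proper_card; apply/properP; split.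
  by apply/subsetP => f; rewrite !inE => /andP [/andP [_ ->] ->].
by exists h; rewrite !inE ?hH ?chord_h ?eqxx.
Qed.

(* Exchange argument: a spanning tree of [G[V]] with the fewest chords
   contains every edge of C inside [V]; otherwise swapping a critical chord
   for that cycle edge would give a spanning tree with fewer chords. *)
Lemma min_chord_tree_cycle_edge (F : {set {set T}}) v :
  (forall x, e x (sigma x)) -> min_chord_tree e sigma V F ->
  v \in V -> sigma v \in V -> [set v; sigma v] \in F.
Proof.
move=> e_cycle [[F_edge F_conn card_F] F_min] vV svV; apply/negPn/negP => gF.
have F_sub f : f \in F -> f \subset V by move=> /F_edge /andP [].
have [H [h [subHF hH chord_h connH not_connH]]] :=
  critical_chord vV svV F_sub gF (F_conn _ _ vV svV).
have [p [q [def_h vp svq]]] := bridge_ends hH connH not_connH.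
have hF : h \in F by apply: (subsetP subHF).
pose F' := (F :\ h) :|: [set [set v; sigma v]].
have sub_F' a b : edge_rel (H :\ h) a b -> edge_rel F' a b.
  by rewrite /edge_rel !inE => /andP [-> /(subsetP subHF) ->].
have sym_F' := sym_connect_sym (@edge_rel_sym _ F').
(* [p] and [q] stay connected through the new edge [{v, sigma v}] *)
have conn_pq : connect (edge_rel F') p q.
  apply: (@connect_trans _ _ v).
    by rewrite sym_F'; apply: connect_sub vp => a b /sub_F' /connect1.
  apply: (@connect_trans _ _ (sigma v)); first by apply: connect1; rewrite /edge_rel !inE eqxx orbT.
  by apply: connect_sub svq => a b /sub_F' /connect1.
have tree_F' : spanning_tree e V F'.
  split.
  - move=> f; rewrite !inE => /orP [/andP [_ /F_edge] //| /eqP ->].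
    rewrite subUset !sub1set vV svV !andbT.
    by apply/existsP; exists v; apply/existsP; exists (sigma v); rewrite e_cycle eqxx.
  - move=> a b aV bV; apply: connect_sub (F_conn _ _ aV bV) => u u' Fuu'.
    case: (eqVneq [set u; u'] h) => [|neq_h].
      by rewrite def_h => /set2_inj [[-> ->] | [-> ->]]; rewrite // sym_F'.
    by apply: connect1; rewrite /edge_rel !inE neq_h Fuu'.
  - rewrite /F' setUC cardsU1 (cardsD1 h F) hF in card_F *.
    by rewrite inE negb_and gF orbT add1n -card_F.
have := F_min _ tree_F'; apply/negP; rewrite -ltnNge /nchords.
rewrite (cardsD1 h [set f in F | ~~ C_edge sigma f]) inE hF chord_h add1n ltnS.
apply: subset_leq_card; apply/subsetP => f; rewrite !inE.
case/andP => /orP [/andP [-> ->] -> //| /eqP ->].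
by case/negP; apply/existsP; exists v.
Qed.

End MinChordTree.

Lemma connect_within (T : finType) (E : rel T) x y :
  connect E x y -> connect [rel a b | [&& connect E x a, connect E x b & E a b]] x y.
Proof.
pose E' := [rel a b | [&& connect E x a, connect E x b & E a b]].
move=> conn; suff closed a b : connect E' x a -> E a b -> connect E' x b.
  exact: connect_invariant closed (connect0 E' x) conn.
move=> conn_a Eab.
have xa : connect E x a by move: conn_a; apply: connect_sub => u u' /and3P [_ _ /connect1].
by apply: connect_trans conn_a (connect1 _); rewrite /= xa Eab (connect_trans xa (connect1 Eab)).
Qed.

Section SplitDistrict.

Variables (T : finType) (e : rel T) (sigma : {perm T}) (V : {set T}).
Variables (F : {set {set T}}) (c : T) (A : {set T}) (x : T).
Hypothesis sigma_cycle : forall x y : T, fconnect sigma x y.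
Hypothesis V_proper : V != setT.
Hypothesis e_sym : symmetric e.
Hypothesis tree_F : spanning_tree e V F.
Hypothesis F_cycle : forall u, u \in V -> sigma u \in V -> [set u; sigma u] \in F.
Hypothesis center_c : tree_center V F c.
Hypothesis fragA : fragment sigma V A.
Hypothesis cA : c \notin A.
Hypothesis xA : x \in A.

(* [stay]: the component of [c] in [F - A]; [shift]: the rest of [V],
   which contains [A] and will be moved to a neighbouring district. *)
Definition avoid_rel : rel T :=
  [rel a b | [&& a \notin A, b \notin A & edge_rel F a b]].
Definition stay : {set T} := [set r | connect avoid_rel c r].
Definition shift : {set T} := V :\: stay.

Lemma F_edge a b : edge_rel F a b -> [/\ a \in V, b \in V & e a b].
Proof.
case: tree_F => F_edges _ _ /F_edges /andP [/existsP [u /existsP [w /andP [e_uw /eqP eq_ab]]]].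
move=> /subsetP sub_abV; rewrite !sub_abV ?set21 ?set22 //.
by split=> //; case: (set2_inj eq_ab) => [[-> ->] | [-> ->]]; rewrite // e_sym.
Qed.

Lemma c_stay : c \in stay.
Proof. by rewrite inE connect0. Qed.

Lemma stay_sub : stay \subset V.
Proof.
apply/subsetP => r; rewrite inE; apply: connect_invariant => [a b _ /and3P [_ _ /F_edge []] //|].
by case: center_c.
Qed.

Lemma stay_avoids r : r \in stay -> r \notin A.
Proof.
by rewrite inE; apply: (connect_invariant (K := [pred r | r \notin A])) => // a b _ /and3P [].
Qed.

Lemma in_shift w : (w \in shift) = (w \in V) && (w \notin stay).
Proof. by rewrite inE andbC. Qed.

Lemma A_shift : A \subset shift.
Proof.
apply/subsetP => w wA; rewrite in_shift (subsetP (fragment_sub fragA)) //=.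
by apply: contraTN wA => /stay_avoids.
Qed.

Lemma stay_exit a b : a \in stay -> edge_rel F a b -> b \notin A -> b \in stay.
Proof.
move=> a_stay Fab bA; have aA := stay_avoids a_stay.
by move: a_stay; rewrite !inE => ca; apply: connect_trans ca (connect1 _); apply/and3P.
Qed.

Definition shift_rel : rel T :=
  [rel a b | [&& a \in shift, b \in shift & edge_rel F a b]].

Lemma shift_rel_sym : symmetric shift_rel.
Proof. by move=> a b; rewrite /shift_rel /= edge_rel_sym; do 2 case: (_ \in shift). Qed.

Lemma shift_rel_closed u v : connect shift_rel u v -> u \in shift -> v \in shift.
Proof.
by move=> conn uS; apply: (connect_invariant (K := mem shift)) conn => // a b _ /and3P [].
Qed.

(* Inside [shift], every vertex reaches [x] along [F]: the tree path from
   a vertex of [shift] to [c] first hits [A] (leaving [shift] needs an edge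
   into [stay], which only vertices of [A] have), and [A] is a run of
   cycle edges, all in [F]. *)
Lemma shift_reach v : v \in shift -> connect shift_rel v x.
Proof.
have [V_conn c_V] : (forall a b, a \in V -> b \in V -> connect (edge_rel F) a b) /\ c \in V.
  by case: tree_F => _ V_conn _; case: center_c.
have reach_A w : w \in shift -> exists2 a, a \in A & connect shift_rel w a.
  move=> wS; have wV : w \in V by move: wS; rewrite in_shift => /andP [].
  have c_out : ~~ connect shift_rel w c.
    apply: contraTN c_stay => /shift_rel_closed /(_ wS).
    by rewrite in_shift => /andP [].
  have [a [b [Fab wa not_wb]]] := connect_exit (V_conn _ _ wV c_V) (connect0 _ w) c_out.
  have aS : a \in shift by apply: shift_rel_closed wa wS.
  exists a => //; apply: contraNT not_wb => aA; apply: connect_trans wa (connect1 _).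
  have [_ bV _] := F_edge Fab; apply/and3P; split=> //; rewrite in_shift bV /=.
  apply/negP => b_stay; move: aS; rewrite in_shift => /andP [_ /negP []].
  by apply: stay_exit b_stay _ aA; rewrite edge_rel_sym.
have [a0 A_path] := fragment_path sigma_cycle V_proper fragA.
have A_conn w : w \in A -> connect shift_rel a0 w.
  move=> /A_path; apply: connect_sub => u u' /and3P [uA u'A /eqP def_u']; apply: connect1.
  have subAV := subsetP (fragment_sub fragA).
  apply/and3P; split; rewrite ?(subsetP A_shift) // /edge_rel def_u' F_cycle ?subAV //.
  by rewrite -def_u'.
move=> /reach_A [a aA conn_va]; apply: connect_trans conn_va _.
by apply: connect_trans (A_conn x xA); rewrite (sym_connect_sym shift_rel_sym) A_conn.
Qed.

(* [shift] lies in the component of [x] in [F - c], so the center property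
   bounds its size by half of [V]. *)
Lemma card_shift : 2 * #|shift| <= #|V|.
Proof.
have xV : x \in V by rewrite (subsetP (fragment_sub fragA)).
have [_ half] := center_c; apply: leq_trans (half x xV _); last by apply: contraNneq cA => <-.
rewrite leq_mul2l /=; apply: subset_leq_card; apply/subsetP => v vS; rewrite inE.
have c_shift : c \notin shift by rewrite in_shift c_stay andbF.
move: (shift_reach vS); rewrite (sym_connect_sym shift_rel_sym); apply: connect_sub.
move=> a b /and3P [aS bS Fab]; apply: connect1; apply/and3P.
by split=> //; [apply: contraNneq c_shift => <- | apply: contraNneq c_shift => <-].
Qed.

(* No edge of C joins [stay] and [shift]: such an edge is in [F], so it
   would have to enter [A] from [stay], but [A] is closed under C-steps in [V]. *)
Lemma stay_succ w : w \in V -> sigma w \in V -> (sigma w \in stay) = (w \in stay).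
Proof.
move=> wV swV; have Fw : edge_rel F w (sigma w) by apply: F_cycle.
apply/idP/idP => [sw_stay|w_stay].
  case: (boolP (w \in A)) => [wA|wA]; last by apply: stay_exit sw_stay _ wA; rewrite edge_rel_sym.
  by have := stay_avoids sw_stay; rewrite (fragment_succ sigma_cycle V_proper fragA wA swV).
case: (boolP (sigma w \in A)) => [swA|swA]; last exact: stay_exit w_stay Fw swA.
have := fragment_pred sigma_cycle V_proper fragA swA; rewrite permK => /(_ wV) wA.
by have := stay_avoids w_stay; rewrite wA.
Qed.

(* [stay] is connected in [G]: it is a component of a subforest of [F]. *)
Lemma stay_connected : induced_connected e stay.
Proof.
pose G := [rel a b | [&& a \in stay, b \in stay & e a b]].
have symG : connect_sym G.
  by apply: sym_connect_sym => a b; rewrite /= e_sym; do 2 case: (_ \in stay).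
suff from_c r : r \in stay -> connect G c r.
  by move=> r1 r2 /from_c c_r1 /from_c c_r2; apply: connect_trans c_r2; rewrite symG.
rewrite inE => /connect_within; apply: connect_sub => a b /and3P [ca cb /and3P [_ _ Fab]].
by apply: connect1; have [_ _ e_ab] := F_edge Fab; rewrite /= !inE ca cb e_ab.
Qed.

Lemma shift_reach_graph v :
  v \in shift -> connect [rel a b | [&& a \in shift, b \in shift & e a b]] v x.
Proof.
move=> /shift_reach; apply: connect_sub => a b /and3P [aS bS /F_edge [_ _ e_ab]].
by apply: connect1; rewrite /= aS bS e_ab.
Qed.

Lemma stay_props :
  [/\ c \in stay, stay \subset V,
      forall w, w \in V -> sigma w \in V -> (sigma w \in stay) = (w \in stay) &
      induced_connected e stay].
Proof. by split; [exact: c_stay | exact: stay_sub | exact: stay_succ | exact: stay_connected]. Qed.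

Lemma shift_props :
  [/\ x \in V :\: stay, 2 * #|V :\: stay| <= #|V| &
      forall w, w \in V :\: stay ->
        connect [rel a b | [&& a \in V :\: stay, b \in V :\: stay & e a b]] w x].
Proof. by split; [exact: (subsetP A_shift) | exact: card_shift | exact: shift_reach_graph]. Qed.

End SplitDistrict.

Lemma partition_notin (T : finType) (Q : {set {set T}}) D B :
  partition Q D -> B != set0 -> [disjoint B & D] -> B \notin Q.
Proof.
move=> partQ B_nz disBD; apply: contra B_nz => BQ.
by rewrite -(setIidPl (partitionS partQ BQ)) setI_eq0.
Qed.

Section Recombination.

Variables (T : finType) (P : {set {set T}}) (V U R : {set T}).
Hypothesis partP : partition P [set: T].
Hypotheses (VP : V \in P) (UP : U \in P) (neq_UV : U != V).
Hypothesis R_sub : R \subset V.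
Hypothesis R_nz : R != set0.

Definition recombine : {set {set T}} := (P :\ V :\ U) :|: [set R; U :|: (V :\: R)].

Let rest := [set: T] :\: V :\: U.

Lemma partition_rest : partition (P :\ V :\ U) rest.
Proof. by apply: partitionD1; [apply: partitionD1 | rewrite !inE neq_UV]. Qed.

Lemma disjoint_UV : [disjoint U & V].
Proof. by apply: (trivIsetP (partition_trivIset partP)). Qed.

Lemma disjoint_merged_rest : [disjoint U :|: (V :\: R) & rest].
Proof.
rewrite disjoint_subset; apply/subsetP => w; rewrite !inE.
by case/orP => [-> | /andP [_ ->]]; rewrite ?andbF.
Qed.

Lemma disjoint_R_others : [disjoint R & (U :|: (V :\: R)) :|: rest].
Proof.
rewrite disjoint_subset; apply/subsetP => w wR; have wV := subsetP R_sub w wR.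
rewrite !inE wR wV /= !andbF !orbF; apply: contraTN wV => wU.
by rewrite (disjointFr disjoint_UV wU).
Qed.

Lemma merged_nz : U :|: (V :\: R) != set0.
Proof.
have [u uU] := set0Pn _ (partition_neq0 partP UP).
by apply/set0Pn; exists u; rewrite inE uU.
Qed.

Lemma recombineE : recombine = R |: (U :|: (V :\: R) |: (P :\ V :\ U)).
Proof. by rewrite /recombine setUC -setUA. Qed.

Lemma recombine_partition : partition recombine [set: T].
Proof.
have part_merged := partitionU1 partition_rest merged_nz disjoint_merged_rest.
have -> : [set: T] = R :|: ((U :|: (V :\: R)) :|: rest).
  by apply/setP => w; rewrite !inE; case: (w \in R) (w \in U) (w \in V) => [] [] [].
by rewrite recombineE; apply: partitionU1 part_merged R_nz disjoint_R_others.
Qed.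

(* Neither new district is an untouched block, so the number of districts
   is unchanged. *)
Lemma card_recombine : #|recombine| = #|P|.
Proof.
have part_merged := partitionU1 partition_rest merged_nz disjoint_merged_rest.
rewrite recombineE cardsU1 (partition_notin part_merged R_nz disjoint_R_others).
rewrite cardsU1 (partition_notin partition_rest merged_nz disjoint_merged_rest).
by rewrite (cardsD1 V P) VP (cardsD1 U (P :\ V)) !inE neq_UV UP.
Qed.

Lemma recombine_fewer_cuts (sigma : {perm T}) x y :
  (forall w, w \in V -> sigma w \in V -> (sigma w \in R) = (w \in R)) ->
  x \in V :\: R -> y \in U -> (y == sigma x) || (x == sigma y) ->
  #|[set w | cut_vertex sigma recombine w]| < #|[set w | cut_vertex sigma P w]|.
Proof.
move=> R_succ xS yU xy; have triP := partition_trivIset partP.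
have W2_rec : U :|: (V :\: R) \in recombine by rewrite !inE eqxx !orbT.
apply: proper_card; apply/properP; split.
  apply/subsetP => w; rewrite !inE; apply: contra => /existsP [B /and3P [BP wB pwB]].
  have eq_w : sigma ((sigma^-1)%g w) = w by rewrite permKV.
  apply/existsP; case: (eqVneq B V) => [eqBV | neqBV]; last case: (eqVneq B U) => [eqBU | neqBU].
  - subst B; case: (boolP (w \in R)) => wR.
      exists R; rewrite !inE eqxx orbT wR /= -(R_succ _ pwB) ?eq_w //.
    exists (U :|: (V :\: R)); rewrite W2_rec !inE wB pwB wR orbT /= -(R_succ _ pwB) eq_w //.
    by rewrite (negbTE wR) orbT.
  - by exists (U :|: (V :\: R)); rewrite W2_rec !inE -eqBU wB pwB.
  - by exists B; rewrite !inE neqBV neqBU BP wB pwB.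
have [w [wW2 pwW2 UV_w]] : exists w, [/\ w \in U :|: (V :\: R),
    (sigma^-1)%g w \in U :|: (V :\: R) &
    ((w \in U) && ((sigma^-1)%g w \in V)) || ((w \in V) && ((sigma^-1)%g w \in U))].
  have [xR xV] : x \notin R /\ x \in V by apply/andP; rewrite -in_setD.
  case/orP: xy => /eqP def.
    exists y; have -> : (sigma^-1)%g y = x by rewrite def permK.
    by rewrite !inE yU xR xV !orbT.
  exists x; have -> : (sigma^-1)%g x = y by rewrite def permK.
  by rewrite !inE yU xR xV !orbT.
exists w; rewrite !inE /cut_vertex; last first.
  by rewrite negbK; apply/existsP; exists (U :|: (V :\: R)); rewrite W2_rec wW2.
apply/negP => /existsP [B /and3P [BP wB pwB]].
have two_blocks a b : a \in B -> b \in B -> a \in U -> b \in V -> False.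
  move=> aB bB aU bV; case/eqP: neq_UV.
  by rewrite -(same_block triP BP UP aB aU) (same_block triP BP VP bB bV).
case/orP: UV_w => /andP [h1 h2]; first exact: two_blocks wB pwB h1 h2.
exact: two_blocks pwB wB h2 h1.
Qed.

End Recombination.

Section SizeBounds.
Local Open Scope ring_scope.

Lemma size_part (K : realFieldType) (r v m s : K) :
  0 <= r -> r <= v -> `|v - m| <= s -> m <= s -> `|r - m| <= s.
Proof. by move=> r_ge0 le_rv; rewrite !ler_norml => /andP [? ?] ?; apply/andP; split; lra. Qed.

Lemma size_merge (K : realFieldType) (u t v m s : K) :
  0 <= u -> 0 <= t -> 2 * t <= v -> u <= m -> `|v - m| <= s -> m <= s ->
  `|u + t - m| <= s.
Proof. by move=> ? ? ? ?; rewrite !ler_norml => /andP [? ?] ?; apply/andP; split; lra. Qed.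

End SizeBounds.

Lemma induced_connected_join (T : finType) (e : rel T) (U S : {set T}) x y :
  symmetric e -> induced_connected e U ->
  (forall w, w \in S -> connect [rel a b | [&& a \in S, b \in S & e a b]] w x) ->
  x \in S -> y \in U -> e x y -> induced_connected e (U :|: S).
Proof.
move=> e_sym U_conn S_reach xS yU e_xy.
pose G := [rel a b | [&& a \in U :|: S, b \in U :|: S & e a b]].
have symG : connect_sym G.
  by apply: sym_connect_sym => a b; rewrite /= e_sym; do 2 case: (_ \in U :|: S).
have GU a b : a \in U -> b \in U -> connect G a b.
  by move=> aU bU; apply: connect_sub (U_conn _ _ aU bU) => u u' /and3P [uU u'U e_uu'];
     apply: connect1; rewrite /= !inE uU u'U.
suff to_x w : w \in U :|: S -> connect G w x.
  by move=> w1 w2 /to_x w1x /to_x w2x; apply: connect_trans w1x _; rewrite symG.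
case/setUP => [wU | /S_reach].
  apply: connect_trans (GU _ _ wU yU) (connect1 _).
  by rewrite /= !inE yU xS orbT e_sym.
by apply: connect_sub => u u' /and3P [uS u'S e_uu']; apply: connect1; rewrite /= !inE uS u'S !orbT.
Qed.

Lemma recombine_BCP (T : finType) (e : rel T) (k : nat) (s : rat)
    (P : {set {set T}}) (V U R : {set T}) :
  BCP e k s P -> V \in P -> U \in P -> U != V -> R \subset V -> R != set0 ->
  (#|T|%:R / k%:R <= s)%R -> small_d k U -> 2 * #|V :\: R| <= #|V| ->
  induced_connected e R -> induced_connected e (U :|: (V :\: R)) ->
  BCP e k s (recombine P V U R).
Proof.
move=> [partP cardP sizes] VP UP neq_UV R_sub R_nz ideal_s U_small S_half R_conn W_conn.
split; [exact: recombine_partition | by rewrite card_recombine |].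
move=> B; rewrite !inE => /orP [/andP [_ /andP [_ BP]] | /orP [/eqP -> | /eqP ->]].
- exact: sizes.
- split=> //; apply: size_part (sizes V VP).2 ideal_s; rewrite ?ler0n //.
  by rewrite ler_nat subset_leq_card.
- split=> //; have disUS : U :&: (V :\: R) = set0.
    by apply: disjoint_setI0; apply: disjointWr (disjoint_UV partP VP UP neq_UV); apply: subsetDl.
  rewrite cardsU disUS cards0 subn0 natrD.
  apply: size_merge (sizes V VP).2 ideal_s; rewrite ?ler0n //.
  by rewrite -natrM ler_nat.
Qed.

Lemma recombine_move (T : finType) (e : rel T) (k : nat) (s : rat)
    (P : {set {set T}}) (V U R : {set T}) :
  V \in P -> U \in P -> U != V -> R \subset V ->
  BCP e k s (recombine P V U R) -> recombine P V U R != P ->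
  recombination e k s P (recombine P V U R).
Proof.
move=> VP UP neq_UV R_sub bcp' neqP; exists V, U, R, (U :|: (V :\: R)); split=> //.
  by rewrite VP UP eq_sym neq_UV.
apply/setP => w; rewrite !in_setU in_setD.
by case: (boolP (w \in R)) => wR; rewrite /= ?(subsetP R_sub w wR) // orbC.
Qed.

Unset Implicit Arguments.

Theorem mainTheorem5 (T : finType) (e : rel T) (sigma : {perm T})
    (k : nat) (s : rat) (P : {set {set T}})
    (Tr : {set T} -> {set {set T}}) (cen : {set T} -> T) :
  simple_graph e ->
  hamilton_cycle e sigma ->
  2 <= k -> (k %| #|T|)%N ->
  (#|T|%:R / k%:R <= s)%R ->
  BCP e k s P ->
  ~ canonical_part sigma P ->
  (forall V, V \in P -> min_chord_tree e sigma V (Tr V) /\ tree_center V (Tr V) (cen V)) ->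
  (exists V A x U y,
     [/\ V \in P /\ large_d k V,
         [&& fragment sigma V A, cen V \notin A & x \in A],
         U \in P /\ small_d k U,
         y \in U & (y == sigma x) || (x == sigma y)]) ->
  exists P', recombination e k s P P' /\ (total_frag sigma P' < total_frag sigma P)%N.
Proof.
move=> [e_sym _] [_ e_cycle sigma_cycle] k_ge2 _ ideal_s bcpP _ trees
  [V [A [x [U [y [[VP V_large] /and3P [fragA cA xA] [UP U_small] yU xy]]]]]].
have [partP cardP districts] := bcpP; have P_gt1 : 1 < #|P| by rewrite cardP.
have V_proper := block_proper partP P_gt1 VP.
have neq_UV : U != V by apply: contraTneq U_small => ->; rewrite /small_d -ltNge.
have [min_tree center] := trees V VP.
have F_cycle u : u \in V -> sigma u \in V -> [set u; sigma u] \in Tr V :=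
  min_chord_tree_cycle_edge sigma_cycle V_proper e_cycle min_tree.
pose R := stay (Tr V) (cen V) A.
have [cR R_sub R_succ R_conn] :=
  stay_props sigma_cycle V_proper e_sym min_tree.1 F_cycle center fragA cA.
have [xS S_half S_reach] :=
  shift_props sigma_cycle V_proper e_sym min_tree.1 F_cycle center fragA cA xA.
have R_nz : R != set0 by apply/set0Pn; exists (cen V).
have e_xy : e x y by case/orP: xy => /eqP ->; [apply: e_cycle | rewrite e_sym e_cycle].
have W_conn : induced_connected e (U :|: (V :\: R)).
  exact: induced_connected_join e_sym (districts U UP).1 S_reach xS yU e_xy.
have bcp' := recombine_BCP bcpP VP UP neq_UV R_sub R_nz ideal_s U_small S_half R_conn W_conn.
have [part' card' _] := bcp'.
have fewer : total_frag sigma (recombine P V U R) < total_frag sigma P.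
  rewrite (total_frag_cuts sigma_cycle partP P_gt1) (total_frag_cuts sigma_cycle part').
    exact: (recombine_fewer_cuts partP VP UP neq_UV R_succ xS yU xy).
  by rewrite card' -cardP.
exists (recombine P V U R); split=> //; apply: recombine_move => //.
by apply: contraTneq fewer => ->; rewrite ltnn.
Qed.
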